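(* Let $\alpha\ge0$ and $0\le\beta<1$. Let $f=h+\overline{g}\in\mathcal{W}_{\mathcal{H}}^0(\alpha,\beta)$ and let $\phi$ be analytic in $\mathbb{D}$ with $\phi(0)=0$, $\phi'(0)=1$ and $\Re\dfrac{\phi(z)}{z}>\dfrac12$ for all $z\in\mathbb{D}$. Then $f\,\widehat{*}\,\phi:=h*\phi+\overline{g*\phi}\in\mathcal{W}_{\mathcal{H}}^0(\alpha,\beta)$.
   Context: Let $\mathbb{D}=\{z\in\mathbb{C}:|z|<1\}$. $\mathcal{H}^0$ denotes the class of harmonic maps $f=h+\overline{g}$ on $\mathbb{D}$, with $h,g$ analytic in $\mathbb{D}$, $h(z)=z+\sum_{n\ge2}a_nz^n$ and $g(z)=\sum_{n\ge2}b_nz^n$. For $\alpha\ge0$, $0\le\beta<1$, $\mathcal{W}_{\mathcal{H}}^0(\alpha,\beta)$ denotes the class of $f=h+\overline{g}\in\mathcal{H}^0$ such that $\Re\big(h'(z)+\alpha zh''(z)-\beta\big)>|g'(z)+\alpha zg''(z)|$ for all $z\in\mathbb{D}$. For analytic $\psi_1(z)=\sum c_nz^n$, $\psi_2(z)=\sum d_nz^n$, the Hadamard product is $(\psi_1*\psi_2)(z)=\sum c_nd_nz^n$. *)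

From Stdlib Require Import Reals Lra ClassicalEpsilon.
Open Scope R_scope.

Record Cplx : Type := mkC { Re : R; Im : R }.

Definition C0 : Cplx := mkC 0 0.
Definition RtoC (x : R) : Cplx := mkC x 0.
Definition Cadd (z w : Cplx) : Cplx := mkC (Re z + Re w) (Im z + Im w).
Definition Copp (z : Cplx) : Cplx := mkC (- Re z) (- Im z).
Definition Csub (z w : Cplx) : Cplx := Cadd z (Copp w).
Definition Cmul (z w : Cplx) : Cplx :=
  mkC (Re z * Re w - Im z * Im w) (Re z * Im w + Im z * Re w).
Definition Cnorm (z : Cplx) : R := sqrt (Re z * Re z + Im z * Im z).
Definition Cinv (z : Cplx) : Cplx :=
  let d := Re z * Re z + Im z * Im z in mkC (Re z / d) (- Im z / d).
Definition Cdiv (z w : Cplx) : Cplx := Cmul z (Cinv w).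
Fixpoint Cpow (z : Cplx) (n : nat) : Cplx :=
  match n with O => RtoC 1 | S m => Cmul z (Cpow z m) end.

Definition Cseries_cv (u : nat -> Cplx) (l : Cplx) : Prop :=
  Un_cv (fun N => sum_f_R0 (fun k => Re (u k)) N) (Re l) /\
  Un_cv (fun N => sum_f_R0 (fun k => Im (u k)) N) (Im l).

Definition Csum (u : nat -> Cplx) : Cplx :=
  epsilon (inhabits C0) (fun l => Cseries_cv u l).

(* Analytic functions on the unit disk are represented by their Taylor
   coefficient sequences a : nat -> Cplx (a n = coefficient of z^n). *)
Definition analytic_D (a : nat -> Cplx) : Prop :=
  forall z : Cplx, Cnorm z < 1 -> exists l, Cseries_cv (fun n => Cmul (a n) (Cpow z n)) l.

Definition ps (a : nat -> Cplx) (z : Cplx) : Cplx := Csum (fun n => Cmul (a n) (Cpow z n)).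

Definition dcoef (a : nat -> Cplx) : nat -> Cplx :=
  fun n => Cmul (RtoC (INR (S n))) (a (S n)).

Definition hadamard (a b : nat -> Cplx) : nat -> Cplx := fun n => Cmul (a n) (b n).

(* f = h + conj g in H^0 : h(z) = z + sum_{n>=2} a_n z^n, g(z) = sum_{n>=2} b_n z^n,
   both analytic in D. *)
Definition in_H0 (a b : nat -> Cplx) : Prop :=
  analytic_D a /\ analytic_D b /\
  a 0%nat = C0 /\ a 1%nat = RtoC 1 /\ b 0%nat = C0 /\ b 1%nat = C0.

Definition in_WH0 (alpha beta : R) (a b : nat -> Cplx) : Prop :=
  in_H0 a b /\
  forall z : Cplx, Cnorm z < 1 ->
    Re (Csub (Cadd (ps (dcoef a) z)
                   (Cmul (RtoC alpha) (Cmul z (ps (dcoef (dcoef a)) z))))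
             (RtoC beta))
    > Cnorm (Cadd (ps (dcoef b) z)
                  (Cmul (RtoC alpha) (Cmul z (ps (dcoef (dcoef b)) z)))).

(* The coefficients of (h * phi)' + alpha z (h * phi)'' are those of A * q, where A are the
   coefficients of h' + alpha z h'' and q those of phi(z) / z. So it suffices to show that
   Re A - beta > |B| on the disk, Re q >= 1/2 and q(0) = 1 imply Re (A * q) - beta > |B * q|.
   At a given z, rotate (B * q)(z) onto the negative real axis by a unimodular e; the claim then
   follows from the positivity statement "Re c > 0 implies Re (c * q) > 0" for c = A + e B - beta.
   That statement is a discrete Herglotz argument: sample 2 Re q - 1 on |w| = rho and Re c on
   |w| = |z| / rho at the (2K+1)-st roots of unity. By orthogonality of characters, the mean of the
   (nonnegative) products of the degree-K truncations is the K-th partial sum of Re (c * q)(z), and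
   all truncation errors decay geometrically in K. *)

From Stdlib Require Import Reals.
Open Scope R_scope.
From Stdlib Require Import Lra Lia Psatz ClassicalEpsilon FunctionalExtensionality Classical.

Lemma Cext (z w : Cplx) : Re z = Re w -> Im z = Im w -> z = w.
Proof. destruct z, w; simpl; intros -> ->; reflexivity. Qed.

Ltac Csimpl := unfold Csub, Cadd, Copp, Cmul, RtoC, C0 in *; simpl in *.
Ltac Cring := apply Cext; Csimpl; ring.

Lemma Cnorm_ge0 (z : Cplx) : 0 <= Cnorm z.
Proof. apply sqrt_pos. Qed.

Lemma Cnorm_sq (z : Cplx) : Cnorm z * Cnorm z = Re z * Re z + Im z * Im z.
Proof. apply sqrt_sqrt; nra. Qed.

Lemma le_of_sq_le (u v : R) : 0 <= v -> u * u <= v * v -> u <= v.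
Proof. intros; nra. Qed.

Lemma Rabs_Re_le (z : Cplx) : Rabs (Re z) <= Cnorm z.
Proof.
  apply le_of_sq_le; [apply Cnorm_ge0|].
  rewrite Cnorm_sq, <- Rabs_mult, Rabs_right; nra.
Qed.

Lemma Rabs_Im_le (z : Cplx) : Rabs (Im z) <= Cnorm z.
Proof.
  apply le_of_sq_le; [apply Cnorm_ge0|].
  rewrite Cnorm_sq, <- Rabs_mult, Rabs_right; nra.
Qed.

Lemma Cnorm_le_Rabs_add (z : Cplx) : Cnorm z <= Rabs (Re z) + Rabs (Im z).
Proof.
  pose proof (Rabs_pos (Re z)); pose proof (Rabs_pos (Im z)).
  apply le_of_sq_le; [lra|]. rewrite Cnorm_sq.
  rewrite <- (Rabs_right (Re z * Re z)), <- (Rabs_right (Im z * Im z)), !Rabs_mult by nra.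
  nra.
Qed.

Lemma Cnorm_mul (z w : Cplx) : Cnorm (Cmul z w) = Cnorm z * Cnorm w.
Proof. unfold Cnorm. rewrite <- sqrt_mult_alt by nra. f_equal. Csimpl. ring. Qed.

Lemma Cnorm_RtoC (x : R) : Cnorm (RtoC x) = Rabs x.
Proof. unfold Cnorm, RtoC; simpl. rewrite Rmult_0_l, Rplus_0_r. apply sqrt_Rsqr_abs. Qed.

Lemma Cnorm_C0 : Cnorm C0 = 0.
Proof. change C0 with (RtoC 0). rewrite Cnorm_RtoC. apply Rabs_R0. Qed.

Lemma Cnorm_pow (z : Cplx) (n : nat) : Cnorm (Cpow z n) = Cnorm z ^ n.
Proof.
  induction n as [|n IH]; simpl.
  - rewrite Cnorm_RtoC. apply Rabs_R1.
  - rewrite Cnorm_mul, IH. reflexivity.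
Qed.

Lemma dot_le_Cnorm_mul (z w : Cplx) : Re z * Re w + Im z * Im w <= Cnorm z * Cnorm w.
Proof.
  pose proof (Cnorm_ge0 z); pose proof (Cnorm_ge0 w).
  apply le_of_sq_le; [nra|].
  replace (Cnorm z * Cnorm w * (Cnorm z * Cnorm w))
    with ((Cnorm z * Cnorm z) * (Cnorm w * Cnorm w)) by ring.
  rewrite !Cnorm_sq. pose proof (Rle_0_sqr (Re z * Im w - Im z * Re w)). unfold Rsqr in *. nra.
Qed.

Lemma Cnorm_triangle (z w : Cplx) : Cnorm (Cadd z w) <= Cnorm z + Cnorm w.
Proof.
  pose proof (Cnorm_ge0 z); pose proof (Cnorm_ge0 w); pose proof (dot_le_Cnorm_mul z w).
  apply le_of_sq_le; [lra|].
  rewrite Cnorm_sq. Csimpl.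
  pose proof (Cnorm_sq z); pose proof (Cnorm_sq w). nra.
Qed.

Lemma Cpow_mul (z w : Cplx) (n : nat) : Cpow (Cmul z w) n = Cmul (Cpow z n) (Cpow w n).
Proof. induction n as [|n IH]; simpl; [Cring|rewrite IH; Cring]. Qed.

Lemma Cpow_RtoC (x : R) (n : nat) : Cpow (RtoC x) n = RtoC (x ^ n).
Proof. induction n as [|n IH]; simpl; [reflexivity|rewrite IH; Cring]. Qed.

Definition polar (rho theta : R) : Cplx := mkC (rho * cos theta) (rho * sin theta).

Lemma Cnorm_polar (rho theta : R) : 0 <= rho -> Cnorm (polar rho theta) = rho.
Proof.
  intros Hrho. unfold Cnorm, polar; simpl.
  pose proof (sin2_cos2 theta) as E. unfold Rsqr in E.
  replace (rho * cos theta * (rho * cos theta) + rho * sin theta * (rho * sin theta))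
    with (Rsqr rho) by (unfold Rsqr; nra).
  apply sqrt_Rsqr; assumption.
Qed.

Lemma Cpow_polar (rho theta : R) (n : nat) :
  Cpow (polar rho theta) n = polar (rho ^ n) (INR n * theta).
Proof.
  unfold polar. induction n as [|n IH]; simpl Cpow.
  - rewrite Rmult_0_l, cos_0, sin_0. Cring.
  - rewrite IH, S_INR, Rmult_plus_distr_r, Rmult_1_l, cos_plus, sin_plus. Cring.
Qed.

Definition Cconj (z : Cplx) : Cplx := mkC (Re z) (- Im z).

Definition Re_rot (u : Cplx) (A : R) : R := Re (Cmul u (polar 1 A)).

Lemma Re_rot_neg (u : Cplx) (A : R) : Re_rot u (- A) = Re_rot (Cconj u) A.
Proof. unfold Re_rot, polar, Cconj; simpl. rewrite cos_neg, sin_neg. ring. Qed.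

Lemma Re_rot_0 (u : Cplx) : Re_rot u 0 = Re u.
Proof. unfold Re_rot, polar; simpl. rewrite cos_0, sin_0. ring. Qed.

Lemma Re_rot_mul (u v : Cplx) (A B : R) :
  Re_rot u A * Re_rot v B = (Re_rot (Cmul u v) (A + B) + Re_rot (Cmul u (Cconj v)) (A - B)) / 2.
Proof.
  unfold Re_rot, polar, Cconj; simpl.
  rewrite cos_plus, sin_plus, cos_minus, sin_minus. field.
Qed.

Lemma Re_mul_Cpow_polar (u : Cplx) (rho theta : R) (n : nat) :
  Re (Cmul u (Cpow (polar rho theta) n)) = Re_rot (Cmul u (RtoC (rho ^ n))) (INR n * theta).
Proof. rewrite Cpow_polar. unfold Re_rot, polar; simpl. ring. Qed.

Lemma Cdiv_mul_l (w x : Cplx) : w <> C0 -> Cdiv (Cmul w x) w = x.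
Proof.
  destruct w as [u v]; intros Hw.
  assert (Hd : u * u + v * v <> 0).
  { intros E. apply Hw. assert (u = 0) by nra. assert (v = 0) by nra. subst; reflexivity. }
  unfold Cdiv, Cinv. apply Cext; Csimpl; field; exact Hd.
Qed.

Lemma exists_rotation_to_neg_norm (G : Cplx) :
  exists e, Re (Cmul e G) = - Cnorm G /\ forall w, - Cnorm w <= Re (Cmul e w).
Proof.
  destruct (Req_dec (Cnorm G) 0) as [H0|H0].
  - exists C0. split.
    + rewrite H0. Csimpl. ring.
    + intros w. pose proof (Cnorm_ge0 w). Csimpl. lra.
  - pose proof (Cnorm_ge0 G). pose proof (Cnorm_sq G).
    exists (mkC (- Re G / Cnorm G) (Im G / Cnorm G)). split.
    + Csimpl. apply Rmult_eq_reg_l with (Cnorm G); [|exact H0].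
      field_simplify; [|exact H0]. nra.
    + intros w. pose proof (dot_le_Cnorm_mul G w). Csimpl.
      apply Rmult_le_reg_l with (Cnorm G); [lra|].
      field_simplify; [|exact H0]. nra.
Qed.

Lemma Rdiv_nonneg (x y : R) : 0 <= x -> 0 < y -> 0 <= x / y.
Proof. intros Hx Hy. apply Rmult_le_pos; [exact Hx|left; apply Rinv_0_lt_compat, Hy]. Qed.

Lemma Un_cv_const (c : R) : Un_cv (fun _ => c) c.
Proof. intros e He. exists 0%nat. intros n _. rewrite R_dist_eq. exact He. Qed.

Lemma geom_series_cv (C r : R) : 0 <= r < 1 ->
  Un_cv (fun N => sum_f_R0 (fun n => C * r ^ n) N) (C / (1 - r)).
Proof.
  intros Hr.
  assert (HG := GP_infinite r ltac:(rewrite Rabs_right; lra)).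
  apply (Un_cv_ext (fun N => C * sum_f_R0 (fun n => 1 * r ^ n) N)).
  - intros N. rewrite scal_sum. apply sum_eq. intros; ring.
  - exact (CV_mult _ _ _ _ (Un_cv_const C) HG).
Qed.

Lemma series_geom_dominated (x : nat -> R) (C r : R) :
  0 <= r < 1 -> (forall n, Rabs (x n) <= C * r ^ n) ->
  exists l, Un_cv (fun N => sum_f_R0 x N) l /\
    forall K, Rabs (l - sum_f_R0 x K) <= C * r ^ S K / (1 - r)
              /\ Rabs (sum_f_R0 x K) <= C / (1 - r).
Proof.
  intros Hr Hx.
  assert (HC : 0 <= C) by (specialize (Hx 0%nat); pose proof (Rabs_pos (x 0%nat)); simpl in Hx; lra).
  assert (Hgeom_sum : forall K, sum_f_R0 (fun n => C * r ^ n) K = C * (1 - r ^ S K) / (1 - r)).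
  { intros K. transitivity (C * sum_f_R0 (fun n => r ^ n) K).
    - rewrite scal_sum. apply sum_eq; intros; ring.
    - rewrite tech3 by lra. unfold Rdiv. ring. }
  (* comparison test for the nonnegative series x n + C r^n *)
  destruct (Rseries_CV_comp (fun n => x n + C * r ^ n) (fun n => 2 * C * r ^ n)) as [l1 Hl1].
  { intros n. specialize (Hx n). pose proof (Rle_abs (x n)); pose proof (Rle_abs (- x n)).
    rewrite Rabs_Ropp in *. lra. }
  { exists (2 * C / (1 - r)). exact (geom_series_cv (2 * C) r Hr). }
  set (l := l1 - C / (1 - r)).
  assert (Hl : Un_cv (fun N => sum_f_R0 x N) l).
  { apply (Un_cv_ext (fun N => sum_f_R0 (fun n => x n + C * r ^ n) N
                            - sum_f_R0 (fun n => C * r ^ n) N)).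
    - intros N. rewrite sum_plus. ring.
    - exact (CV_minus _ _ _ _ Hl1 (geom_series_cv C r Hr)). }
  exists l. split; [exact Hl|]. intros K. split.
  - pose proof (sum_maj1 (fun n _ => x n) (fun n => C * r ^ n) 0 l (C / (1 - r)) K Hl
                  (geom_series_cv C r Hr) Hx) as Htail.
    unfold SP in Htail. rewrite Hgeom_sum in Htail.
    replace (C / (1 - r) - C * (1 - r ^ S K) / (1 - r)) with (C * r ^ S K / (1 - r)) in Htail
      by (field; lra).
    exact Htail.
  - eapply Rle_trans; [apply sum_f_R0_triangle|].
    eapply Rle_trans; [apply sum_Rle; intros n _; apply Hx|].
    rewrite Hgeom_sum. pose proof (pow_le r (S K) (proj1 Hr)).
    apply Rmult_le_compat_r; [left; apply Rinv_0_lt_compat; lra|nra].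
Qed.

Lemma Csum_unique (u : nat -> Cplx) (l : Cplx) : Cseries_cv u l -> Csum u = l.
Proof.
  intros [Hre Him]. unfold Csum.
  destruct (epsilon_spec (inhabits C0) (fun l => Cseries_cv u l) (ex_intro _ l (conj Hre Him)))
    as [Hre' Him'].
  apply Cext; eapply UL_sequence; eassumption.
Qed.

Lemma Cseries_cv_ext (u v : nat -> Cplx) (l : Cplx) :
  (forall n, u n = v n) -> Cseries_cv u l -> Cseries_cv v l.
Proof. intros H. replace v with u by (apply functional_extensionality; exact H). auto. Qed.

Lemma Cseries_cv_add (u v : nat -> Cplx) (l1 l2 : Cplx) :
  Cseries_cv u l1 -> Cseries_cv v l2 -> Cseries_cv (fun n => Cadd (u n) (v n)) (Cadd l1 l2).
Proof.
  intros [H1 H2] [H3 H4]. split; simpl.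
  - eapply Un_cv_ext; [|exact (CV_plus _ _ _ _ H1 H3)]. intros; symmetry; apply sum_plus.
  - eapply Un_cv_ext; [|exact (CV_plus _ _ _ _ H2 H4)]. intros; symmetry; apply sum_plus.
Qed.

Lemma sum_scal_l (f : nat -> R) (c : R) (N : nat) :
  sum_f_R0 (fun i => c * f i) N = c * sum_f_R0 f N.
Proof. rewrite scal_sum. apply sum_eq; intros; ring. Qed.

Lemma Cseries_cv_scal (c : Cplx) (u : nat -> Cplx) (l : Cplx) :
  Cseries_cv u l -> Cseries_cv (fun n => Cmul c (u n)) (Cmul c l).
Proof.
  intros [H1 H2]. split; simpl.
  - eapply Un_cv_ext; [|exact (CV_minus _ _ _ _ (CV_mult _ _ _ _ (Un_cv_const (Re c)) H1)
                                                  (CV_mult _ _ _ _ (Un_cv_const (Im c)) H2))].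
    intros; simpl. rewrite minus_sum, !sum_scal_l. reflexivity.
  - eapply Un_cv_ext; [|exact (CV_plus _ _ _ _ (CV_mult _ _ _ _ (Un_cv_const (Re c)) H2)
                                                 (CV_mult _ _ _ _ (Un_cv_const (Im c)) H1))].
    intros; simpl. rewrite sum_plus, !sum_scal_l. reflexivity.
Qed.

Definition single (c : Cplx) : nat -> Cplx := fun n => match n with O => c | S _ => C0 end.

Definition shiftC (u : nat -> Cplx) : nat -> Cplx :=
  fun n => match n with O => C0 | S k => u k end.

Lemma Cseries_cv_single (c : Cplx) : Cseries_cv (single c) c.
Proof.
  assert (Hpart : forall (f : Cplx -> R) N, f C0 = 0 ->
            sum_f_R0 (fun k => f (single c k)) N = f c).
  { intros f N Hf. induction N as [|N IH]; simpl; [reflexivity|]. rewrite IH, Hf. ring. }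
  split.
  - apply (Un_cv_ext (fun _ => Re c)); [|apply Un_cv_const].
    intros N. symmetry. apply (Hpart Re). reflexivity.
  - apply (Un_cv_ext (fun _ => Im c)); [|apply Un_cv_const].
    intros N. symmetry. apply (Hpart Im). reflexivity.
Qed.

Lemma Cseries_cv_shift (u : nat -> Cplx) (l : Cplx) :
  Cseries_cv u l -> Cseries_cv (shiftC u) l.
Proof.
  assert (Hpart : forall (f : Cplx -> R) N, f C0 = 0 ->
            sum_f_R0 (fun k => f (shiftC u k)) (S N) = sum_f_R0 (fun k => f (u k)) N).
  { intros f N Hf. rewrite decomp_sum by lia. simpl. rewrite Hf. ring. }
  intros [H1 H2]. split; apply (CV_shift _ 1).
  - apply (Un_cv_ext (fun N => sum_f_R0 (fun k => Re (u k)) N)); [|exact H1].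
    intros N. rewrite Nat.add_1_r. symmetry. apply (Hpart Re). reflexivity.
  - apply (Un_cv_ext (fun N => sum_f_R0 (fun k => Im (u k)) N)); [|exact H2].
    intros N. rewrite Nat.add_1_r. symmetry. apply (Hpart Im). reflexivity.
Qed.

Lemma Cseries_cv_geom_dominated (u : nat -> Cplx) (C r : R) :
  0 <= r < 1 -> (forall n, Cnorm (u n) <= C * r ^ n) ->
  Cseries_cv u (Csum u) /\
  forall K, Rabs (Re (Csum u) - sum_f_R0 (fun n => Re (u n)) K) <= C * r ^ S K / (1 - r)
            /\ Rabs (sum_f_R0 (fun n => Re (u n)) K) <= C / (1 - r).
Proof.
  intros Hr Hu.
  destruct (series_geom_dominated (fun n => Re (u n)) C r Hr) as [l1 [H1 Hb]].
  { intros n. eapply Rle_trans; [apply Rabs_Re_le|apply Hu]. }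
  destruct (series_geom_dominated (fun n => Im (u n)) C r Hr) as [l2 [H2 _]].
  { intros n. eapply Rle_trans; [apply Rabs_Im_le|apply Hu]. }
  assert (Hcv : Cseries_cv u (mkC l1 l2)) by (split; assumption).
  rewrite (Csum_unique _ _ Hcv). split; [exact Hcv|exact Hb].
Qed.

Definition radius_ge_1 (a : nat -> Cplx) : Prop :=
  forall r, 0 <= r < 1 -> exists C, forall n, Cnorm (a n) * r ^ n <= C.

Lemma radius_ge_1_geom_bound (a : nat -> Cplx) (s r : R) :
  radius_ge_1 a -> 0 <= s -> s < r < 1 ->
  exists C, 0 <= C /\
    forall w n, Cnorm w <= s -> Cnorm (Cmul (a n) (Cpow w n)) <= C * r ^ n.
Proof.
  intros Ha Hs Hr.
  destruct (Ha (s / r)) as [C HC].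
  { split; [apply Rdiv_nonneg; lra|]. apply Rmult_lt_reg_r with r; [lra|].
    unfold Rdiv. rewrite Rmult_assoc, Rinv_l; lra. }
  exists C. split.
  { specialize (HC 0%nat). pose proof (Cnorm_ge0 (a 0%nat)). simpl in HC. lra. }
  intros w n Hw. rewrite Cnorm_mul, Cnorm_pow.
  specialize (HC n). pose proof (Cnorm_ge0 (a n)).
  assert (Hwn : Cnorm w ^ n <= (s / r) ^ n * r ^ n).
  { rewrite <- Rpow_mult_distr. replace (s / r * r) with s by (field; lra).
    apply pow_incr. split; [apply Cnorm_ge0|exact Hw]. }
  pose proof (pow_le r n ltac:(lra)).
  eapply Rle_trans; [apply Rmult_le_compat_l; [lra|exact Hwn]|]. nra.
Qed.

Lemma ps_eq_of_cv (a : nat -> Cplx) (w l : Cplx) :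
  Cseries_cv (fun n => Cmul (a n) (Cpow w n)) l -> ps a w = l.
Proof. apply Csum_unique. Qed.

Lemma ps_cv (a : nat -> Cplx) (w : Cplx) :
  radius_ge_1 a -> Cnorm w < 1 -> Cseries_cv (fun n => Cmul (a n) (Cpow w n)) (ps a w).
Proof.
  intros Ha Hw. pose proof (Cnorm_ge0 w).
  destruct (radius_ge_1_geom_bound a (Cnorm w) ((1 + Cnorm w) / 2) Ha) as [C [_ HC]]; [lra|lra|].
  apply (Cseries_cv_geom_dominated _ C ((1 + Cnorm w) / 2)); [lra|].
  intros n. apply HC. lra.
Qed.

Lemma ps_Re_truncation (a : nat -> Cplx) (s r : R) :
  radius_ge_1 a -> 0 <= s -> s < r < 1 ->
  exists G, 0 <= G /\ forall w, Cnorm w <= s -> forall K,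
    Rabs (Re (ps a w) - sum_f_R0 (fun n => Re (Cmul (a n) (Cpow w n))) K) <= G * r ^ S K
    /\ Rabs (sum_f_R0 (fun n => Re (Cmul (a n) (Cpow w n))) K) <= G.
Proof.
  intros Ha Hs Hr.
  destruct (radius_ge_1_geom_bound a s r Ha Hs Hr) as [C [HC Hbound]].
  exists (C / (1 - r)). split; [apply Rdiv_nonneg; lra|].
  intros w Hw K.
  destruct (Cseries_cv_geom_dominated (fun n => Cmul (a n) (Cpow w n)) C r) as [_ Htrunc];
    [lra|intros n; apply Hbound, Hw|].
  replace (C / (1 - r) * r ^ S K) with (C * r ^ S K / (1 - r)) by (field; lra).
  apply Htrunc.
Qed.

Lemma terms_bounded_of_cv (x : nat -> R) (l : R) :
  Un_cv (fun N => sum_f_R0 x N) l -> exists M, forall n, Rabs (x n) <= M.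
Proof.
  intros H. destruct (maj_by_pos _ (exist _ l H)) as [M [HM0 HM]].
  exists (2 * M). intros [|n].
  - specialize (HM 0%nat). simpl in HM. lra.
  - replace (x (S n)) with (sum_f_R0 x (S n) - sum_f_R0 x n) by (simpl; ring).
    eapply Rle_trans; [apply Rabs_triang|]. rewrite Rabs_Ropp.
    pose proof (HM (S n)); pose proof (HM n). lra.
Qed.

Lemma analytic_D_radius (a : nat -> Cplx) : analytic_D a -> radius_ge_1 a.
Proof.
  intros Ha r Hr.
  destruct (Ha (RtoC r)) as [l [H1 H2]]; [rewrite Cnorm_RtoC, Rabs_right; lra|].
  destruct (terms_bounded_of_cv _ _ H1) as [M1 HM1].
  destruct (terms_bounded_of_cv _ _ H2) as [M2 HM2].
  exists (M1 + M2). intros n.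
  specialize (HM1 n); specialize (HM2 n). rewrite Cpow_RtoC in HM1, HM2. simpl in HM1, HM2.
  rewrite Rmult_0_r, Rminus_0_r, Rabs_mult, (Rabs_right (r ^ n)) in HM1
    by (apply Rle_ge, pow_le; lra).
  rewrite Rmult_0_r, Rplus_0_l, Rabs_mult, (Rabs_right (r ^ n)) in HM2
    by (apply Rle_ge, pow_le; lra).
  pose proof (Cnorm_le_Rabs_add (a n)). pose proof (pow_le r n ltac:(lra)). nra.
Qed.

Lemma radius_analytic_D (a : nat -> Cplx) : radius_ge_1 a -> analytic_D a.
Proof. intros Ha w Hw. exists (ps a w). apply ps_cv; assumption. Qed.

Lemma INR_S_mul_pow_bounded (x : R) : 0 <= x < 1 -> exists K, forall n, INR (S n) * x ^ n <= K.
Proof.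
  intros Hx. destruct (Req_dec x 0) as [->|Hx0].
  { exists 1. intros [|n]; simpl; lra. }
  set (d := / x - 1).
  assert (Hd : 0 < d).
  { unfold d. assert (1 < / x) by (rewrite <- Rinv_1; apply Rinv_lt_contravar; lra). lra. }
  exists (1 + / d). intros n.
  (* Bernoulli: 1 + n d <= (1 + d)^n = x^-n *)
  assert (Hb : x ^ n * (1 + INR n * d) <= 1).
  { assert (Hone : x ^ n * (1 + d) ^ n = 1).
    { rewrite <- Rpow_mult_distr. unfold d. replace (x * (1 + (/ x - 1))) with 1 by (field; lra).
      apply pow1. }
    rewrite <- Hone at 2. apply Rmult_le_compat_l; [apply pow_le; lra|apply poly, Hd]. }
  pose proof (pow_le x n ltac:(lra)). pose proof (pos_INR n).
  assert (0 < / d) by (apply Rinv_0_lt_compat; lra).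
  assert (Hn : INR n * x ^ n <= / d).
  { apply Rmult_le_reg_l with d; [lra|]. rewrite Rinv_r by lra. nra. }
  rewrite S_INR. assert (x ^ n <= 1) by (rewrite <- (pow1 n); apply pow_incr; lra). nra.
Qed.

Lemma radius_add (u v : nat -> Cplx) :
  radius_ge_1 u -> radius_ge_1 v -> radius_ge_1 (fun n => Cadd (u n) (v n)).
Proof.
  intros Hu Hv r Hr.
  destruct (Hu r Hr) as [C1 H1]; destruct (Hv r Hr) as [C2 H2].
  exists (C1 + C2). intros n.
  specialize (H1 n); specialize (H2 n). pose proof (Cnorm_triangle (u n) (v n)).
  pose proof (pow_le r n ltac:(lra)). nra.
Qed.

Lemma radius_scal (c : Cplx) (u : nat -> Cplx) :
  radius_ge_1 u -> radius_ge_1 (fun n => Cmul c (u n)).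
Proof.
  intros Hu r Hr. destruct (Hu r Hr) as [C HC].
  exists (Cnorm c * C). intros n. rewrite Cnorm_mul, Rmult_assoc.
  apply Rmult_le_compat_l; [apply Cnorm_ge0|apply HC].
Qed.

Lemma radius_single (c : Cplx) : radius_ge_1 (single c).
Proof.
  intros r Hr. exists (Cnorm c). intros [|n]; simpl.
  - lra.
  - rewrite Cnorm_C0. pose proof (Cnorm_ge0 c). lra.
Qed.

Lemma radius_shift (u : nat -> Cplx) : radius_ge_1 u -> radius_ge_1 (shiftC u).
Proof.
  intros Hu r Hr. destruct (Hu r Hr) as [C HC]. exists (Rmax 0 C). intros [|n]; simpl.
  - rewrite Cnorm_C0, Rmult_0_l. apply Rmax_l.
  - specialize (HC n). pose proof (Cnorm_ge0 (u n)). pose proof (pow_le r n ltac:(lra)).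
    assert (Cnorm (u n) * r ^ n * r <= Cnorm (u n) * r ^ n * 1)
      by (apply Rmult_le_compat_l; [apply Rmult_le_pos|]; lra).
    pose proof (Rmax_r 0 C). nra.
Qed.

Lemma radius_dcoef (a : nat -> Cplx) : radius_ge_1 a -> radius_ge_1 (dcoef a).
Proof.
  intros Ha r Hr. set (t := (1 + r) / 2).
  destruct (Ha t) as [C HC]; [unfold t; lra|].
  destruct (INR_S_mul_pow_bounded (r / t)) as [K HK].
  { unfold t. split; [apply Rdiv_nonneg; lra|].
    apply Rmult_lt_reg_r with ((1 + r) / 2); [lra|]. unfold Rdiv. field_simplify; lra. }
  exists (C * K / t). intros n. unfold dcoef.
  rewrite Cnorm_mul, Cnorm_RtoC, Rabs_right by (apply Rle_ge, pos_INR).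
  specialize (HC (S n)); specialize (HK n). simpl in HC.
  assert (Ht : 0 < t) by (unfold t; lra).
  assert (Er : r ^ n = t ^ n * (r / t) ^ n) by (rewrite <- Rpow_mult_distr; f_equal; field; lra).
  pose proof (Cnorm_ge0 (a (S n))). pose proof (pos_INR (S n)).
  pose proof (pow_le t n ltac:(lra)). pose proof (pow_le (r / t) n ltac:(apply Rdiv_nonneg; lra)).
  apply Rmult_le_reg_l with t; [exact Ht|].
  replace (t * (C * K / t)) with (C * K) by (field; lra).
  replace (t * (INR (S n) * Cnorm (a (S n)) * r ^ n))
    with ((Cnorm (a (S n)) * (t * t ^ n)) * (INR (S n) * (r / t) ^ n)) by (rewrite Er; ring).
  assert (0 <= Cnorm (a (S n)) * (t * t ^ n)) by (apply Rmult_le_pos; nra).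
  assert (0 <= C) by lra.
  apply Rmult_le_compat; nra.
Qed.

Lemma radius_unshift (a : nat -> Cplx) : radius_ge_1 a -> radius_ge_1 (fun n => a (S n)).
Proof.
  intros Ha r Hr. destruct (radius_dcoef a Ha r Hr) as [C HC]. exists C. intros n.
  specialize (HC n). unfold dcoef in HC.
  rewrite Cnorm_mul, Cnorm_RtoC, Rabs_right in HC by (apply Rle_ge, pos_INR).
  assert (1 <= INR (S n)) by (rewrite S_INR; pose proof (pos_INR n); lra).
  assert (0 <= Cnorm (a (S n)) * r ^ n)
    by (apply Rmult_le_pos; [apply Cnorm_ge0|apply pow_le; lra]).
  nra.
Qed.

Lemma radius_hadamard (u v : nat -> Cplx) :
  radius_ge_1 u -> radius_ge_1 v -> radius_ge_1 (hadamard u v).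
Proof.
  intros Hu Hv r Hr. set (t := (1 + r) / 2).
  destruct (Hu t) as [C1 H1]; [unfold t; lra|].
  destruct (Hv t) as [C2 H2]; [unfold t; lra|].
  exists (C1 * C2). intros n. unfold hadamard. rewrite Cnorm_mul.
  specialize (H1 n); specialize (H2 n).
  assert (Hrt : r ^ n <= t ^ n * t ^ n) by (rewrite <- Rpow_mult_distr; apply pow_incr; unfold t; nra).
  pose proof (Cnorm_ge0 (u n)); pose proof (Cnorm_ge0 (v n)).
  pose proof (pow_le t n ltac:(unfold t; lra)).
  apply Rle_trans with ((Cnorm (u n) * t ^ n) * (Cnorm (v n) * t ^ n)).
  - replace ((Cnorm (u n) * t ^ n) * (Cnorm (v n) * t ^ n))
      with ((Cnorm (u n) * Cnorm (v n)) * (t ^ n * t ^ n)) by ring.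
    apply Rmult_le_compat_l; [apply Rmult_le_pos|]; assumption.
  - apply Rmult_le_compat; try assumption; apply Rmult_le_pos; assumption.
Qed.

Lemma ps_add (u v : nat -> Cplx) (w : Cplx) :
  radius_ge_1 u -> radius_ge_1 v -> Cnorm w < 1 ->
  ps (fun n => Cadd (u n) (v n)) w = Cadd (ps u w) (ps v w).
Proof.
  intros Hu Hv Hw. apply ps_eq_of_cv.
  eapply Cseries_cv_ext; [|exact (Cseries_cv_add _ _ _ _ (ps_cv u w Hu Hw) (ps_cv v w Hv Hw))].
  intros n. Cring.
Qed.

Lemma ps_scal (c : Cplx) (u : nat -> Cplx) (w : Cplx) :
  radius_ge_1 u -> Cnorm w < 1 -> ps (fun n => Cmul c (u n)) w = Cmul c (ps u w).
Proof.
  intros Hu Hw. apply ps_eq_of_cv.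
  eapply Cseries_cv_ext; [|exact (Cseries_cv_scal c _ _ (ps_cv u w Hu Hw))].
  intros n. Cring.
Qed.

Lemma ps_single (c w : Cplx) : ps (single c) w = c.
Proof.
  apply ps_eq_of_cv. eapply Cseries_cv_ext; [|exact (Cseries_cv_single c)].
  intros [|n]; simpl; Cring.
Qed.

Lemma ps_shift (u : nat -> Cplx) (w : Cplx) :
  radius_ge_1 u -> Cnorm w < 1 -> ps (shiftC u) w = Cmul w (ps u w).
Proof.
  intros Hu Hw. apply ps_eq_of_cv.
  eapply Cseries_cv_ext; [|exact (Cseries_cv_shift _ _ (Cseries_cv_scal w _ _ (ps_cv u w Hu Hw)))].
  intros [|n]; simpl; Cring.
Qed.

Lemma ps_at_0 (a : nat -> Cplx) : ps a C0 = a 0%nat.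
Proof.
  apply ps_eq_of_cv. eapply Cseries_cv_ext; [|exact (Cseries_cv_single (a 0%nat))].
  intros [|n]; simpl; Cring.
Qed.

Lemma ps_dilate (a : nat -> Cplx) (t : R) (w : Cplx) :
  ps a (Cmul (RtoC t) w) = ps (fun n => Cmul (RtoC (t ^ n)) (a n)) w.
Proof.
  unfold ps. f_equal. apply functional_extensionality. intros n.
  rewrite Cpow_mul, Cpow_RtoC. Cring.
Qed.

Lemma sum_telescope (g : nat -> R) (n : nat) :
  sum_f_R0 (fun l => g (S l) - g l) n = g (S n) - g 0%nat.
Proof. induction n as [|n IH]; simpl; [|rewrite IH]; ring. Qed.

Lemma sum_comm (f : nat -> nat -> R) (N K : nat) :
  sum_f_R0 (fun l => sum_f_R0 (fun n => f l n) K) N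
  = sum_f_R0 (fun n => sum_f_R0 (fun l => f l n) N) K.
Proof. induction N as [|N IH]; simpl; [reflexivity|]. rewrite IH, <- sum_plus. reflexivity. Qed.

Lemma sum_mul_sum (f g : nat -> R) (K M : nat) :
  sum_f_R0 f K * sum_f_R0 g M = sum_f_R0 (fun n => sum_f_R0 (fun m => f n * g m) M) K.
Proof.
  rewrite Rmult_comm, scal_sum. apply sum_eq; intros.
  rewrite <- sum_scal_l. apply sum_eq; intros; ring.
Qed.

Lemma sum_single_term (f : nat -> R) (n K : nat) : (n <= K)%nat ->
  (forall m, (m <= K)%nat -> m <> n -> f m = 0) -> sum_f_R0 f K = f n.
Proof.
  intros HnK Hf. induction K as [|K IH].
  - replace n with 0%nat by lia. reflexivity.
  - simpl. destruct (Nat.eq_dec n (S K)) as [->|Hne].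
    + rewrite sum_eq_R0; [ring|]. intros m Hm. apply Hf; lia.
    + rewrite IH, (Hf (S K)) by (lia || (intros; apply Hf; lia)). ring.
Qed.

(* The N-th roots of unity are [polar 1 (th N l)], l < N. *)
Definition th (N l : nat) : R := 2 * PI * INR l / INR N.

Lemma sum_cos_roots (N k : nat) (psi : R) : (0 < k < N)%nat ->
  sum_f_R0 (fun l => cos (INR k * th N l + psi)) (N - 1) = 0.
Proof.
  intros Hk.
  assert (HN : 0 < INR N) by (apply lt_0_INR; lia).
  assert (HkN : 0 < INR k < INR N) by (split; [apply lt_0_INR|apply lt_INR]; lia).
  set (phi := 2 * PI * INR k / INR N).
  assert (Hphi : 0 < phi / 2 < PI).
  { pose proof PI_RGT_0. unfold phi. split.
    - apply Rmult_lt_0_compat; [|lra]. apply Rdiv_lt_0_compat; nra.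
    - apply Rmult_lt_reg_r with (2 * INR N); [lra|]. field_simplify; [|lra]. nra. }
  pose proof (sin_gt_0 _ (proj1 Hphi) (proj2 Hphi)) as Hsin.
  (* 2 sin(phi/2) cos(l phi + psi) telescopes *)
  set (g := fun l : nat => sin ((INR l - 1/2) * phi + psi)).
  assert (Htel : forall l, cos (INR k * th N l + psi) * (2 * sin (phi / 2)) = g (S l) - g l).
  { intros l. unfold g. rewrite S_INR.
    replace ((INR l + 1 - 1/2) * phi + psi) with ((INR l * phi + psi) + phi / 2) by field.
    replace ((INR l - 1/2) * phi + psi) with ((INR l * phi + psi) - phi / 2) by field.
    replace (INR k * th N l) with (INR l * phi) by (unfold th, phi; field; lra).
    rewrite sin_plus, sin_minus. ring. }
  apply Rmult_eq_reg_r with (2 * sin (phi / 2)); [|lra].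
  rewrite Rmult_0_l, Rmult_comm, scal_sum.
  rewrite (sum_eq _ _ _ (fun l _ => Htel l)), sum_telescope.
  replace (S (N - 1)) with N by lia. unfold g. simpl INR.
  replace ((INR N - 1/2) * phi + psi) with (((0 - 1/2) * phi + psi) + 2 * INR k * PI)
    by (unfold phi; field; lra).
  rewrite sin_period. ring.
Qed.

Lemma sum_Re_rot_roots (N k : nat) (u : Cplx) : (0 < k < N)%nat ->
  sum_f_R0 (fun l => Re_rot u (INR k * th N l)) (N - 1) = 0.
Proof.
  intros Hk.
  (* Re_rot u A = Re u cos A + Im u cos (A + PI/2) *)
  rewrite (sum_eq _ (fun l => Re u * cos (INR k * th N l + 0)
                               + Im u * cos (INR k * th N l + PI / 2))).
  - rewrite sum_plus, !sum_scal_l, !sum_cos_roots by exact Hk. ring.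
  - intros l _. unfold Re_rot, polar; simpl. rewrite Rplus_0_r, cos_plus, cos_PI2, sin_PI2. ring.
Qed.

Lemma sum_Re_rot_roots_diff (N a b : nat) (u : Cplx) : (a < N)%nat -> (b < N)%nat ->
  sum_f_R0 (fun l => Re_rot u ((INR a - INR b) * th N l)) (N - 1)
  = if Nat.eq_dec a b then INR N * Re u else 0.
Proof.
  intros Ha Hb. destruct (Nat.eq_dec a b) as [<-|Hab].
  - rewrite (sum_eq _ (fun _ => Re u)), sum_cte.
    + replace (S (N - 1)) with N by lia. ring.
    + intros l _. rewrite Rminus_diag, Rmult_0_l. apply Re_rot_0.
  - destruct (Nat.lt_ge_cases b a).
    + rewrite <- (sum_Re_rot_roots N (a - b) u) by lia.
      apply sum_eq. intros l _. rewrite minus_INR by lia. reflexivity.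
    + rewrite <- (sum_Re_rot_roots N (b - a) (Cconj u)) by lia.
      apply sum_eq. intros l _. rewrite minus_INR by lia.
      rewrite <- Re_rot_neg. f_equal. ring.
Qed.

Lemma sum_Re_rot_product (N n m : nat) (u v : Cplx) : (n + m < N)%nat ->
  sum_f_R0 (fun l => Re_rot u (INR n * th N l) * Re_rot v (- (INR m * th N l))) (N - 1)
  = INR N / 2 * ((if Nat.eq_dec n m then Re (Cmul u v) else 0)
                 + (if Nat.eq_dec (n + m) 0 then Re (Cmul u (Cconj v)) else 0)).
Proof.
  intros Hnm.
  rewrite (sum_eq _ (fun l => / 2 * Re_rot (Cmul u v) ((INR n - INR m) * th N l)
                            + / 2 * Re_rot (Cmul u (Cconj v)) ((INR (n + m) - INR 0) * th N l))).
  - rewrite sum_plus, !sum_scal_l, !sum_Re_rot_roots_diff by lia.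
    destruct (Nat.eq_dec n m), (Nat.eq_dec (n + m) 0); field.
  - intros l _. rewrite Re_rot_mul, plus_INR. simpl INR.
    replace (INR n * th N l + - (INR m * th N l)) with ((INR n - INR m) * th N l) by ring.
    replace (INR n * th N l - - (INR m * th N l)) with ((INR n + INR m - 0) * th N l) by ring.
    field.
Qed.

Lemma sum_Re_rot_roots_neg (N m : nat) (v : Cplx) : (m < N)%nat ->
  sum_f_R0 (fun l => Re_rot v (- (INR m * th N l))) (N - 1)
  = if Nat.eq_dec m 0 then INR N * Re v else 0.
Proof.
  intros Hm.
  transitivity (sum_f_R0 (fun l => Re_rot (Cconj v) ((INR m - INR 0) * th N l)) (N - 1)).
  - apply sum_eq. intros l _. rewrite Re_rot_neg. f_equal. simpl INR. ring.
  - rewrite sum_Re_rot_roots_diff by lia. reflexivity.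
Qed.

Lemma sum_Re_rot_product_row (N K n : nat) (u : Cplx) (v : nat -> Cplx) :
  (K + K < N)%nat -> (n <= K)%nat ->
  sum_f_R0 (fun m => sum_f_R0 (fun l =>
      Re_rot u (INR n * th N l) * Re_rot (v m) (- (INR m * th N l))) (N - 1)) K
  = INR N / 2 * (Re (Cmul u (v n))
                 + if Nat.eq_dec (n + n) 0 then Re (Cmul u (Cconj (v n))) else 0).
Proof.
  intros HKN Hn.
  rewrite (sum_single_term _ n) by
    (auto; intros m Hm Hmn; rewrite sum_Re_rot_product by lia;
     destruct (Nat.eq_dec n m), (Nat.eq_dec (n + m) 0); lia || ring).
  rewrite sum_Re_rot_product by lia.
  destruct (Nat.eq_dec n n); [reflexivity|lia].
Qed.

Lemma discrete_hadamard_identity (K : nat) (u v : nat -> Cplx) : u 0%nat = RtoC 1 ->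
  sum_f_R0 (fun l => (2 * sum_f_R0 (fun n => Re_rot (u n) (INR n * th (S (K + K)) l)) K - 1)
                     * sum_f_R0 (fun m => Re_rot (v m) (- (INR m * th (S (K + K)) l))) K) (K + K)
  = INR (S (K + K)) * sum_f_R0 (fun n => Re (Cmul (u n) (v n))) K.
Proof.
  intros Hu0. set (N := S (K + K)). replace (K + K)%nat with (N - 1)%nat by (unfold N; lia).
  rewrite (sum_eq _ (fun l => 2 * sum_f_R0 (fun n => sum_f_R0 (fun m =>
                        Re_rot (u n) (INR n * th N l) * Re_rot (v m) (- (INR m * th N l))) K) K
                      - sum_f_R0 (fun m => Re_rot (v m) (- (INR m * th N l))) K)).
  2:{ intros l _. rewrite <- sum_mul_sum. ring. }
  rewrite minus_sum, sum_scal_l, sum_comm, (sum_comm (fun l m => Re_rot (v m) _)).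
  assert (Hdouble : sum_f_R0 (fun n => sum_f_R0 (fun l => sum_f_R0 (fun m =>
                        Re_rot (u n) (INR n * th N l) * Re_rot (v m) (- (INR m * th N l))) K)
                      (N - 1)) K
                    = INR N / 2 * (sum_f_R0 (fun n => Re (Cmul (u n) (v n))) K + Re (v 0%nat))).
  { rewrite (sum_eq _ _ _ (fun n Hn => eq_trans (sum_comm _ _ _)
                                               (sum_Re_rot_product_row N K n (u n) v
                                                  ltac:(unfold N; lia) Hn))).
    rewrite sum_scal_l, sum_plus. f_equal. f_equal.
    rewrite (sum_single_term _ 0) by
      (lia || (intros n _ Hn; destruct (Nat.eq_dec (n + n) 0); [lia|reflexivity])).
    simpl. rewrite Hu0. unfold Cconj; simpl. ring. }
  assert (Hmarginal : sum_f_R0 (fun m => sum_f_R0 (fun l =>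
                        Re_rot (v m) (- (INR m * th N l))) (N - 1)) K = INR N * Re (v 0%nat)).
  { rewrite (sum_eq _ _ _ (fun m (Hm : (m <= K)%nat) => sum_Re_rot_roots_neg N m (v m) ltac:(unfold N; lia))).
    rewrite (sum_single_term _ 0) by
      (lia || (intros m _ Hm; destruct (Nat.eq_dec m 0); [lia|reflexivity])).
    reflexivity. }
  rewrite Hdouble, Hmarginal. field.
Qed.

Lemma Rabs_mul_sub_le (w wK x xK e1 e2 g1 g2 : R) :
  Rabs (w - wK) <= e1 -> Rabs (x - xK) <= e2 -> Rabs wK <= g1 -> Rabs xK <= g2 ->
  Rabs (w * x - wK * xK) <= e1 * (g2 + e2) + g1 * e2.
Proof.
  intros H1 H2 H3 H4.
  replace (w * x - wK * xK) with ((w - wK) * x + wK * (x - xK)) by ring.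
  assert (Hx : Rabs x <= g2 + e2).
  { replace x with (xK + (x - xK)) by ring. eapply Rle_trans; [apply Rabs_triang|lra]. }
  eapply Rle_trans; [apply Rabs_triang|]. rewrite !Rabs_mult.
  apply Rplus_le_compat; apply Rmult_le_compat; auto using Rabs_pos.
Qed.

Lemma mean_ge_of_approx (f g : nat -> R) (n : nat) (M eps : R) :
  0 <= sum_f_R0 f n -> (forall l, (l <= n)%nat -> Rabs (f l - g l) <= eps) ->
  sum_f_R0 g n = INR (S n) * M -> - eps <= M.
Proof.
  intros Hf Hfg Hg.
  assert (Hdiff : Rabs (sum_f_R0 (fun l => f l - g l) n) <= eps * INR (S n)).
  { eapply Rle_trans; [apply sum_f_R0_triangle|]. rewrite <- sum_cte. apply sum_Rle. exact Hfg. }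
  rewrite minus_sum, Hg in Hdiff. pose proof (lt_0_INR (S n) ltac:(lia)).
  pose proof (Rle_abs (sum_f_R0 f n - INR (S n) * M)).
  apply Rmult_le_reg_l with (INR (S n)); nra.
Qed.

Lemma nonneg_of_geom_lower_bounds (x B r : R) :
  0 <= r < 1 -> (forall K, - (B * r ^ S K) <= x) -> 0 <= x.
Proof.
  intros Hr Hx. destruct (Rle_or_lt 0 x) as [|Hneg]; [assumption|exfalso].
  pose proof (Rabs_pos B).
  destruct (pow_lt_1_zero r ltac:(rewrite Rabs_right; lra) (- x / (Rabs B + 1))) as [K HK].
  { apply Rdiv_lt_0_compat; lra. }
  specialize (HK (S K) ltac:(lia)). specialize (Hx K).
  rewrite Rabs_right in HK by (apply Rle_ge, pow_le; lra).
  pose proof (pow_le r (S K) ltac:(lra)).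
  assert (Hsmall : (Rabs B + 1) * r ^ S K < - x).
  { apply Rmult_lt_compat_l with (r := Rabs B + 1) in HK; [|lra].
    replace ((Rabs B + 1) * (- x / (Rabs B + 1))) with (- x) in HK by (field; lra). exact HK. }
  pose proof (Rle_abs B). pose proof (Rle_abs (- B)). rewrite Rabs_Ropp in *. nra.
Qed.

Section HadamardPositivity.

Variables c q : nat -> Cplx.
Hypothesis c_rad : radius_ge_1 c.
Hypothesis q_rad : radius_ge_1 q.
Hypothesis q_0 : q 0%nat = RtoC 1.
Hypothesis c_Re : forall w, Cnorm w < 1 -> 0 <= Re (ps c w).
Hypothesis q_Re : forall w, Cnorm w < 1 -> 1 / 2 <= Re (ps q w).

Variable z : Cplx.
Hypothesis z_in : Cnorm z < 1.

Let rho : R := (1 + Cnorm z) / 2.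
Let z0 : Cplx := Cmul (RtoC (/ rho)) z.
Let s : R := Rmax rho (Cnorm z / rho).
Let r : R := (1 + s) / 2.

Let q_point (N l : nat) : Cplx := polar rho (th N l).
Let c_point (N l : nat) : Cplx := Cmul (polar 1 (- th N l)) z0.

Lemma rho_bounds : 0 <= Cnorm z < rho /\ rho < 1.
Proof. pose proof (Cnorm_ge0 z). unfold rho. lra. Qed.

Lemma sample_radius_bounds : rho <= s /\ Cnorm z / rho <= s /\ 0 <= s /\ s < r < 1.
Proof.
  pose proof rho_bounds. pose proof (Cnorm_ge0 z).
  assert (Hz0 : Cnorm z / rho < 1).
  { apply Rmult_lt_reg_r with rho; [lra|]. unfold Rdiv. rewrite Rmult_assoc, Rinv_l; lra. }
  assert (Hs : s < 1) by (apply Rmax_lub_lt; lra).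
  pose proof (Rmax_l rho (Cnorm z / rho)) as Hl; pose proof (Rmax_r rho (Cnorm z / rho)) as Hr.
  fold s in Hl, Hr. unfold r. lra.
Qed.

Lemma Cnorm_q_point (N l : nat) : Cnorm (q_point N l) <= s.
Proof.
  pose proof rho_bounds. pose proof sample_radius_bounds.
  unfold q_point. rewrite Cnorm_polar; lra.
Qed.

Lemma Cnorm_c_point (N l : nat) : Cnorm (c_point N l) <= s.
Proof.
  pose proof rho_bounds. pose proof sample_radius_bounds.
  unfold c_point, z0. rewrite !Cnorm_mul, Cnorm_polar, Cnorm_RtoC, Rabs_right by
    (lra || (apply Rle_ge; left; apply Rinv_0_lt_compat; lra)).
  unfold Rdiv in *. lra.
Qed.

Lemma Re_q_term (N l n : nat) :
  Re (Cmul (q n) (Cpow (q_point N l) n))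
  = Re_rot (Cmul (q n) (RtoC (rho ^ n))) (INR n * th N l).
Proof. apply Re_mul_Cpow_polar. Qed.

Lemma Re_c_term (N l m : nat) :
  Re (Cmul (c m) (Cpow (c_point N l) m))
  = Re_rot (Cmul (c m) (Cpow z0 m)) (- (INR m * th N l)).
Proof.
  unfold c_point. rewrite Cpow_mul.
  replace (Cmul (c m) (Cmul (Cpow (polar 1 (- th N l)) m) (Cpow z0 m)))
    with (Cmul (Cmul (c m) (Cpow z0 m)) (Cpow (polar 1 (- th N l)) m)) by Cring.
  rewrite Re_mul_Cpow_polar, pow1.
  replace (Cmul (Cmul (c m) (Cpow z0 m)) (RtoC 1)) with (Cmul (c m) (Cpow z0 m)) by Cring.
  f_equal. ring.
Qed.

Lemma Re_hadamard_term (n : nat) :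
  Re (Cmul (Cmul (q n) (RtoC (rho ^ n))) (Cmul (c n) (Cpow z0 n)))
  = Re (Cmul (hadamard c q n) (Cpow z n)).
Proof.
  pose proof rho_bounds. assert (rho ^ n <> 0) by (apply pow_nonzero; lra).
  unfold z0, hadamard. rewrite Cpow_mul, Cpow_RtoC, pow_inv.
  Csimpl. field. assumption.
Qed.

Let q_trunc (K N l : nat) : R :=
  sum_f_R0 (fun n => Re_rot (Cmul (q n) (RtoC (rho ^ n))) (INR n * th N l)) K.
Let c_trunc (K N l : nat) : R :=
  sum_f_R0 (fun m => Re_rot (Cmul (c m) (Cpow z0 m)) (- (INR m * th N l))) K.

Lemma sample_product_error : exists E, forall K N l,
  Rabs ((2 * Re (ps q (q_point N l)) - 1) * Re (ps c (c_point N l))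
        - (2 * q_trunc K N l - 1) * c_trunc K N l) <= E * r ^ S K.
Proof.
  destruct sample_radius_bounds as (_ & _ & Hs0 & Hsr).
  destruct (ps_Re_truncation q s r q_rad Hs0 Hsr) as [Gq [HGq Tq]].
  destruct (ps_Re_truncation c s r c_rad Hs0 Hsr) as [Gc [HGc Tc]].
  exists (2 * Gq * (Gc + Gc) + (2 * Gq + 1) * Gc). intros K N l.
  assert (Hx : 0 <= r ^ S K <= 1) by
    (split; [apply pow_le; lra|rewrite <- (pow1 (S K)); apply pow_incr; lra]).
  destruct (Tq (q_point N l) (Cnorm_q_point N l) K) as [Hq1 Hq2].
  destruct (Tc (c_point N l) (Cnorm_c_point N l) K) as [Hc1 Hc2].
  rewrite (sum_eq _ _ _ (fun n _ => Re_q_term N l n)) in Hq1, Hq2.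
  rewrite (sum_eq _ _ _ (fun n _ => Re_c_term N l n)) in Hc1, Hc2.
  fold (q_trunc K N l) in Hq1, Hq2. fold (c_trunc K N l) in Hc1, Hc2.
  eapply Rle_trans;
    [apply (Rabs_mul_sub_le _ _ _ _ (2 * (Gq * r ^ S K)) (Gc * r ^ S K) (2 * Gq + 1) Gc)|].
  - replace (2 * Re (ps q (q_point N l)) - 1 - (2 * q_trunc K N l - 1))
      with (2 * (Re (ps q (q_point N l)) - q_trunc K N l)) by ring.
    rewrite Rabs_mult, Rabs_right by lra. lra.
  - exact Hc1.
  - eapply Rle_trans; [apply Rabs_triang|].
    rewrite Rabs_mult, Rabs_Ropp, Rabs_R1, Rabs_right by lra. lra.
  - exact Hc2.
  - assert (0 <= Gq * Gc * (r ^ S K * (1 - r ^ S K))) by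
      (apply Rmult_le_pos; [apply Rmult_le_pos|apply Rmult_le_pos]; lra).
    nra.
Qed.

Lemma hadamard_truncation_lower_bound :
  exists B, forall K,
    - (B * r ^ S K) <= sum_f_R0 (fun n => Re (Cmul (hadamard c q n) (Cpow z n))) K.
Proof.
  destruct sample_product_error as [E HE]. exists E. intros K.
  set (N := S (K + K)).
  apply (mean_ge_of_approx
           (fun l => (2 * Re (ps q (q_point N l)) - 1) * Re (ps c (c_point N l)))
           (fun l => (2 * q_trunc K N l - 1) * c_trunc K N l) (K + K)).
  - apply cond_pos_sum. intros l. pose proof sample_radius_bounds. apply Rmult_le_pos.
    + pose proof (q_Re (q_point N l)). pose proof (Cnorm_q_point N l). lra.
    + apply c_Re. pose proof (Cnorm_c_point N l). lra.
  - intros l _. apply HE.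
  - unfold q_trunc, c_trunc, N. rewrite discrete_hadamard_identity by (rewrite q_0; Cring).
    f_equal. apply sum_eq. intros n _. apply Re_hadamard_term.
Qed.

Lemma hadamard_Re_nonneg : 0 <= Re (ps (hadamard c q) z).
Proof.
  destruct sample_radius_bounds as (_ & Hzs & Hs0 & Hsr).
  destruct hadamard_truncation_lower_bound as [B HB].
  destruct (ps_Re_truncation (hadamard c q) s r (radius_hadamard c q c_rad q_rad) Hs0 Hsr)
    as [Gm [HGm Tm]].
  apply (nonneg_of_geom_lower_bounds _ (B + Gm) r); [lra|]. intros K.
  assert (Hz : Cnorm z <= s).
  { pose proof rho_bounds. pose proof sample_radius_bounds. lra. }
  destruct (Tm z Hz K) as [Htail _]. specialize (HB K).
  pose proof (Rle_abs (- (Re (ps (hadamard c q) z)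
                          - sum_f_R0 (fun n => Re (Cmul (hadamard c q n) (Cpow z n))) K))).
  rewrite Rabs_Ropp in *. nra.
Qed.

End HadamardPositivity.

Lemma Re_ge_of_geometric_fixpoint (S w : Cplx) (t : R) :
  S = Cadd (RtoC 1) (Cmul w S) -> Cnorm w <= t -> t < 1 -> 1 / (1 + t) <= Re S.
Proof.
  intros HS Hw Ht. destruct S as [a b], w as [x y].
  unfold Cadd, Cmul, RtoC in HS; simpl in HS. injection HS as E1 E2. simpl.
  pose proof (Cnorm_sq (mkC x y)) as Hsq. pose proof (Cnorm_ge0 (mkC x y)). simpl in Hsq.
  assert (Hxy : x * x + y * y <= t * t) by nra.
  assert (x <= t) by nra. assert (- t <= x) by nra.
  assert (Ha : a * ((1 - x) * (1 - x) + y * y) = 1 - x).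
  { replace (a * ((1 - x) * (1 - x) + y * y))
      with ((a * (1 - x) + y * b) * (1 - x) - y * (b * (1 - x) - y * a)) by ring.
    replace (a * (1 - x) + y * b) with 1 by lra. replace (b * (1 - x) - y * a) with 0 by lra. ring. }
  assert (Hd : 0 < (1 - x) * (1 - x) + y * y) by nra.
  assert (Hbound : (1 - x) * (1 - x) + y * y <= (1 + t) * (1 - x)).
  { assert (0 <= (1 - t) * (x + t)) by (apply Rmult_le_pos; lra). nra. }
  apply Rmult_le_reg_l with ((1 + t) * ((1 - x) * (1 - x) + y * y)); [nra|].
  replace ((1 + t) * ((1 - x) * (1 - x) + y * y) * (1 / (1 + t)))
    with ((1 - x) * (1 - x) + y * y) by (field; nra).
  replace ((1 + t) * ((1 - x) * (1 - x) + y * y) * a)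
    with ((1 + t) * (a * ((1 - x) * (1 - x) + y * y))) by ring.
  rewrite Ha. lra.
Qed.

Lemma radius_geometric (t : R) : 0 <= t <= 1 -> radius_ge_1 (fun n => RtoC (t ^ n)).
Proof.
  intros Ht r Hr. exists 1. intros n.
  rewrite Cnorm_RtoC, Rabs_right, <- Rpow_mult_distr by (apply Rle_ge, pow_le; lra).
  rewrite <- (pow1 n). apply pow_incr. nra.
Qed.

Lemma Re_geometric_series_ge (t : R) (w : Cplx) :
  0 <= t < 1 -> Cnorm w < 1 -> 1 / (1 + t) <= Re (ps (fun n => RtoC (t ^ n)) w).
Proof.
  intros Ht Hw.
  assert (Hrad : radius_ge_1 (fun n => RtoC (t ^ n))) by (apply radius_geometric; lra).
  apply (Re_ge_of_geometric_fixpoint _ (Cmul (RtoC t) w) t); [|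
    rewrite Cnorm_mul, Cnorm_RtoC, Rabs_right by lra; pose proof (Cnorm_ge0 w); nra|lra].
  transitivity (Cadd (ps (single (RtoC 1)) w)
                     (ps (shiftC (fun n => Cmul (RtoC t) (RtoC (t ^ n)))) w)).
  - rewrite <- ps_add by auto using radius_single, radius_shift, radius_scal.
    f_equal. apply functional_extensionality. intros [|n]; simpl; Cring.
  - rewrite ps_single, ps_shift, ps_scal by auto using radius_scal. Cring.
Qed.

(* Coefficients of 1 + (1 + t) w / (2 (1 - t w)). *)
Definition half_plane_kernel (t : R) : nat -> Cplx :=
  fun n => match n with O => RtoC 1 | S m => RtoC ((1 + t) / 2 * t ^ m) end.

Lemma radius_half_plane_kernel (t : R) : 0 <= t <= 1 -> radius_ge_1 (half_plane_kernel t).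
Proof.
  intros Ht r Hr. exists 1. intros [|m]; simpl.
  - rewrite Cnorm_RtoC, Rabs_R1. lra.
  - rewrite Cnorm_RtoC, Rabs_right by (apply Rle_ge, Rmult_le_pos; [lra|apply pow_le; lra]).
    assert (t ^ m <= 1) by (rewrite <- (pow1 m); apply pow_incr; lra).
    assert (r ^ m <= 1) by (rewrite <- (pow1 m); apply pow_incr; lra).
    pose proof (pow_le t m ltac:(lra)). pose proof (pow_le r m ltac:(lra)).
    assert (0 <= (1 + t) / 2 * t ^ m <= 1) by (split; nra).
    assert (0 <= r * r ^ m <= 1) by (split; nra).
    nra.
Qed.

Lemma Re_half_plane_kernel (t : R) (w : Cplx) : 0 < t < 1 -> Cnorm w < 1 ->
  1 / 2 <= Re (ps (half_plane_kernel t) w).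
Proof.
  intros Ht Hw. set (kappa := (1 + t) / (2 * t)).
  assert (Hrad : radius_ge_1 (fun n => RtoC (t ^ n))) by (apply radius_geometric; lra).
  assert (Hk : ps (half_plane_kernel t) w
               = Cadd (RtoC (1 - kappa)) (Cmul (RtoC kappa) (ps (fun n => RtoC (t ^ n)) w))).
  { rewrite <- (ps_single (RtoC (1 - kappa)) w), <- ps_scal, <- ps_add
      by auto using radius_single, radius_scal.
    f_equal. apply functional_extensionality.
    intros [|m]; unfold kappa; apply Cext; simpl; field; lra. }
  pose proof (Re_geometric_series_ge t w ltac:(lra) Hw) as Hgeom.
  assert (Hkappa : 0 < kappa) by (unfold kappa; apply Rdiv_lt_0_compat; lra).
  assert (Hhalf : 1 - kappa + kappa * (1 / (1 + t)) = 1 / 2) by (unfold kappa; field; lra).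
  rewrite Hk. simpl. rewrite Rmult_0_l, Rminus_0_r.
  pose proof (Rmult_le_compat_l kappa _ _ (Rlt_le _ _ Hkappa) Hgeom). lra.
Qed.

(* Strictness: c * q at z is a convex combination of c(0) and of (c * k * q) at z / t,
   where the kernel k of [half_plane_kernel t] itself has real part at least 1/2. *)
Lemma hadamard_Re_pos (c q : nat -> Cplx) :
  radius_ge_1 c -> radius_ge_1 q -> q 0%nat = RtoC 1 ->
  (forall w, Cnorm w < 1 -> 0 < Re (ps c w)) ->
  (forall w, Cnorm w < 1 -> 1 / 2 <= Re (ps q w)) ->
  forall z, Cnorm z < 1 -> 0 < Re (ps (hadamard c q) z).
Proof.
  intros Hc Hq Hq0 Pc Pq z Hz. pose proof (Cnorm_ge0 z).
  set (t := (1 + Cnorm z) / 2). assert (Ht : 0 < t < 1) by (unfold t; lra).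
  set (lam := (1 - t) / (1 + t)).
  assert (Hlam : 0 < lam < 1).
  { unfold lam. split; [apply Rdiv_lt_0_compat; lra|].
    apply Rmult_lt_reg_r with (1 + t); [lra|]. field_simplify; lra. }
  set (z1 := Cmul (RtoC (/ t)) z).
  assert (Hz1 : Cnorm z1 < 1).
  { unfold z1. rewrite Cnorm_mul, Cnorm_RtoC, Rabs_right by (left; apply Rinv_0_lt_compat; lra).
    apply Rmult_lt_reg_l with t; [lra|]. rewrite <- Rmult_assoc, Rinv_r by lra. unfold t; lra. }
  assert (Hk : radius_ge_1 (half_plane_kernel t)) by (apply radius_half_plane_kernel; lra).
  set (e := hadamard c (half_plane_kernel t)).
  assert (He : radius_ge_1 e) by (apply radius_hadamard; assumption).
  assert (Pe : forall w, Cnorm w < 1 -> 0 <= Re (ps e w)).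
  { apply hadamard_Re_nonneg; auto.
    - intros w Hw. left. apply Pc, Hw.
    - intros w Hw. apply Re_half_plane_kernel; assumption. }
  assert (Pm : 0 <= Re (ps (hadamard e q) z1)) by (apply hadamard_Re_nonneg; auto).
  assert (Hsplit : ps (hadamard c q) z
                   = Cadd (Cmul (RtoC lam) (c 0%nat)) (Cmul (RtoC (1 - lam)) (ps (hadamard e q) z1))).
  { replace z with (Cmul (RtoC t) z1) at 1
      by (unfold z1; apply Cext; simpl; field; lra).
    rewrite ps_dilate, <- (ps_single (Cmul (RtoC lam) (c 0%nat)) z1), <- ps_scal, <- ps_add
      by auto using radius_single, radius_scal, radius_hadamard.
    f_equal. apply functional_extensionality.
    intros [|n]; unfold e, hadamard, half_plane_kernel, lam; simpl.
    - rewrite Hq0. Cring.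
    - apply Cext; simpl; field; lra. }
  pose proof (Pc C0 ltac:(rewrite Cnorm_C0; lra)) as Pc0. rewrite ps_at_0 in Pc0.
  rewrite Hsplit. simpl. rewrite !Rmult_0_l, !Rminus_0_r. nra.
Qed.

(* Coefficients of h' + alpha z h'' for h with coefficients a. *)
Definition wcoef (alpha : R) (a : nat -> Cplx) : nat -> Cplx :=
  fun k => Cadd (dcoef a k) (Cmul (RtoC alpha) (shiftC (dcoef (dcoef a)) k)).

Lemma radius_wcoef (alpha : R) (a : nat -> Cplx) : radius_ge_1 a -> radius_ge_1 (wcoef alpha a).
Proof.
  intros Ha. apply radius_add; [|apply radius_scal, radius_shift]; repeat apply radius_dcoef; exact Ha.
Qed.

Lemma ps_wcoef (alpha : R) (a : nat -> Cplx) (z : Cplx) : radius_ge_1 a -> Cnorm z < 1 ->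
  ps (wcoef alpha a) z
  = Cadd (ps (dcoef a) z) (Cmul (RtoC alpha) (Cmul z (ps (dcoef (dcoef a)) z))).
Proof.
  intros Ha Hz. unfold wcoef.
  pose proof (radius_dcoef a Ha) as Ha1. pose proof (radius_dcoef _ Ha1) as Ha2.
  rewrite ps_add, ps_scal, ps_shift by auto using radius_scal, radius_shift.
  reflexivity.
Qed.

Lemma wcoef_hadamard (alpha : R) (a p : nat -> Cplx) :
  wcoef alpha (hadamard a p) = hadamard (wcoef alpha a) (fun k => p (S k)).
Proof.
  apply functional_extensionality. intros [|k]; unfold wcoef, dcoef, hadamard; simpl; Cring.
Qed.

Lemma hadamard_preserves_dominance (A B q : nat -> Cplx) (beta : R) :
  radius_ge_1 A -> radius_ge_1 B -> radius_ge_1 q -> q 0%nat = RtoC 1 ->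
  (forall w, Cnorm w < 1 -> 1 / 2 <= Re (ps q w)) ->
  (forall w, Cnorm w < 1 -> Re (ps A w) - beta > Cnorm (ps B w)) ->
  forall z, Cnorm z < 1 -> Re (ps (hadamard A q) z) - beta > Cnorm (ps (hadamard B q) z).
Proof.
  intros HA HB Hq Hq0 Pq HAB z Hz.
  destruct (exists_rotation_to_neg_norm (ps (hadamard B q) z)) as [e [He1 He2]].
  set (c := fun n => Cadd (Cadd (A n) (Cmul e (B n))) (single (RtoC (- beta)) n)).
  assert (Hc : radius_ge_1 c) by (apply radius_add; auto using radius_add, radius_scal, radius_single).
  assert (Pc : forall w, Cnorm w < 1 -> 0 < Re (ps c w)).
  { intros w Hw. unfold c.
    rewrite !ps_add, ps_scal, ps_single by auto using radius_add, radius_scal, radius_single.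
    specialize (HAB w Hw). specialize (He2 (ps B w)). simpl in He2 |- *. lra. }
  pose proof (hadamard_Re_pos c q Hc Hq Hq0 Pc Pq z Hz) as Hpos.
  replace (hadamard c q)
    with (fun n => Cadd (Cadd (hadamard A q n) (Cmul e (hadamard B q n))) (single (RtoC (- beta)) n))
    in Hpos by (apply functional_extensionality; intros [|n]; unfold c, hadamard; simpl;
                [rewrite Hq0|]; Cring).
  rewrite !ps_add, ps_scal, ps_single in Hpos
    by auto using radius_add, radius_scal, radius_single, radius_hadamard.
  simpl in Hpos, He1. lra.
Qed.

Lemma ps_unshift (p : nat -> Cplx) (w : Cplx) : radius_ge_1 p -> Cnorm w < 1 -> p 0%nat = C0 ->
  ps p w = Cmul w (ps (fun k => p (S k)) w).
Proof.
  intros Hp Hw Hp0. rewrite <- ps_shift by auto using radius_unshift.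
  f_equal. apply functional_extensionality. intros [|k]; [exact Hp0|reflexivity].
Qed.

Lemma Re_unshift_ge_half (p : nat -> Cplx) :
  analytic_D p -> p 0%nat = C0 -> p 1%nat = RtoC 1 ->
  (forall z, Cnorm z < 1 -> z <> C0 -> Re (Cdiv (ps p z) z) > 1 / 2) ->
  forall w, Cnorm w < 1 -> 1 / 2 <= Re (ps (fun k => p (S k)) w).
Proof.
  intros Hp Hp0 Hp1 Hquot w Hw. destruct (classic (w = C0)) as [->|Hne].
  - rewrite ps_at_0, Hp1. simpl. lra.
  - specialize (Hquot w Hw Hne).
    rewrite (ps_unshift p w (analytic_D_radius p Hp) Hw Hp0), Cdiv_mul_l in Hquot by exact Hne.
    lra.
Qed.

Lemma in_H0_hadamard (a b p : nat -> Cplx) :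
  in_H0 a b -> analytic_D p -> p 0%nat = C0 -> p 1%nat = RtoC 1 ->
  in_H0 (hadamard a p) (hadamard b p).
Proof.
  intros (Ha & Hb & Ha0 & Ha1 & Hb0 & Hb1) Hp Hp0 Hp1.
  pose proof (analytic_D_radius p Hp).
  unfold hadamard. repeat split.
  - apply radius_analytic_D, radius_hadamard; auto using analytic_D_radius.
  - apply radius_analytic_D, radius_hadamard; auto using analytic_D_radius.
  - rewrite Ha0, Hp0. Cring.
  - rewrite Ha1, Hp1. Cring.
  - rewrite Hb0, Hp0. Cring.
  - rewrite Hb1, Hp1. Cring.
Qed.

Theorem theorem4p7 (alpha beta : R) (a b p : nat -> Cplx) :
  0 <= alpha -> 0 <= beta -> beta < 1 ->
  in_WH0 alpha beta a b ->
  analytic_D p -> p 0%nat = C0 -> p 1%nat = RtoC 1 ->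
  (forall z : Cplx, Cnorm z < 1 -> z <> C0 -> Re (Cdiv (ps p z) z) > 1 / 2) ->
  in_WH0 alpha beta (hadamard a p) (hadamard b p).
Proof.
  intros _ _ _ [Hab HW] Hp Hp0 Hp1 Hquot.
  pose proof Hab as (Ha & Hb & _).
  pose proof (analytic_D_radius a Ha) as Ra.
  pose proof (analytic_D_radius b Hb) as Rb.
  pose proof (analytic_D_radius p Hp) as Rp.
  split; [apply in_H0_hadamard; assumption|].
  intros z Hz.
  rewrite <- !ps_wcoef, !wcoef_hadamard by auto using radius_hadamard.
  assert (HWw : forall w, Cnorm w < 1 ->
            Re (ps (wcoef alpha a) w) - beta > Cnorm (ps (wcoef alpha b) w)).
  { intros w Hw. specialize (HW w Hw). rewrite <- !ps_wcoef in HW by assumption.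
    simpl in HW. lra. }
  pose proof (hadamard_preserves_dominance (wcoef alpha a) (wcoef alpha b) (fun k => p (S k))
                beta (radius_wcoef alpha a Ra) (radius_wcoef alpha b Rb)
                (radius_unshift p Rp) Hp1 (Re_unshift_ge_half p Hp Hp0 Hp1 Hquot) HWw z Hz).
  simpl. lra.
Qed.
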